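(* Consider the cubic system \[ \dot x = -y + a_{02}y^2 + a_{03}y^3,\qquad \dot y = x + b_{20}x^2 + b_{11}xy + b_{02}y^2 + b_{30}x^3 + b_{21}x^2y + b_{12}xy^2, \] where the coefficients $a_{02},a_{03},b_{20},b_{11},b_{02},b_{30},b_{21},b_{12}$ are allowed to be complex (the system being considered on $\mathbb{C}^2$; for real coefficients this is a real planar system). The system is linearizable at the origin if one of the following conditions holds: \begin{enumerate} \item $b_{12}=a_{02}=b_{30}=b_{21}=a_{03}=b_{02}+b_{20}=b_{11}^2+4b_{20}^2=0$; \item $b_{12}=a_{02}=b_{20}=b_{02}=b_{21}=a_{03}=9b_{30}-b_{11}^2=0$; \item $b_{12}=a_{02}=b_{11}=b_{20}=b_{30}=b_{21}=9a_{03}+4b_{02}^2=0$; \item $b_{12}=b_{30}=b_{21}=a_{03}=2b_{02}+5b_{20}=10a_{02}-3b_{11}=4b_{11}^2+25b_{20}^2=0$. \end{enumerate}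
   Context: A system $\dot x=-y+P(x,y)$, $\dot y = x+Q(x,y)$, with $P,Q$ polynomials without constant and linear terms, is called linearizable (at the origin) if there is an analytic change of coordinates $x_1 = x+\sum_{m+n\ge 2}c_{m,n}x^my^n$, $y_1=y+\sum_{m+n\ge2}d_{m,n}x^my^n$ which transforms it into $\dot x_1=-y_1$, $\dot y_1 = x_1$. For real systems, linearizability at the origin is equivalent to the origin being an isochronous center (a center all of whose nearby periodic orbits have the same period). *)

From Stdlib Require Import Reals.
Open Scope R_scope.

Record CC : Type := mkC { Cre : R ; Cim : R }.

Definition C0 : CC := mkC 0 0.
Definition C1 : CC := mkC 1 0.
Definition Cadd (z w : CC) : CC := mkC (Cre z + Cre w) (Cim z + Cim w).
Definition Copp (z : CC) : CC := mkC (- Cre z) (- Cim z).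
Definition Cmul (z w : CC) : CC :=
  mkC (Cre z * Cre w - Cim z * Cim w) (Cre z * Cim w + Cim z * Cre w).
Definition natC (n : nat) : CC := mkC (INR n) 0.
Definition Cnorm (z : CC) : R := sqrt (Cre z * Cre z + Cim z * Cim z).

Fixpoint Csum (n : nat) (f : nat -> CC) : CC :=
  match n with
  | O => C0
  | S k => Cadd (Csum k f) (f k)
  end.

(** * Formal power series in two variables x, y over CC:
    [F i j] is the coefficient of x^i y^j. *)
Definition series := nat -> nat -> CC.

Definition sadd (F G : series) : series := fun i j => Cadd (F i j) (G i j).
Definition sopp (F : series) : series := fun i j => Copp (F i j).
Definition smul (F G : series) : series := fun i j =>
  Csum (S i) (fun a => Csum (S j) (fun b =>
    Cmul (F a b) (G (i - a)%nat (j - b)%nat))).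
Definition sdx (F : series) : series := fun i j => Cmul (natC (S i)) (F (S i) j).
Definition sdy (F : series) : series := fun i j => Cmul (natC (S j)) (F i (S j)).
Definition mono (c : CC) (m n : nat) : series := fun i j =>
  if andb (Nat.eqb i m) (Nat.eqb j n) then c else C0.

(** A power series is convergent (defines an analytic function) on some
    polydisc around the origin: its coefficients satisfy a Cauchy estimate. *)
Definition convergent (F : series) : Prop :=
  exists r M : R, 0 < r /\ forall i j : nat, Cnorm (F i j) * r ^ (i + j) <= M.

(** Linearizability of  x' = P(x,y), y' = Q(x,y)  at the origin:
    there is an analytic change of coordinates
      x1 = x + sum_{m+n>=2} c_{mn} x^m y^n,  y1 = y + sum_{m+n>=2} d_{mn} x^m y^n
    transforming the system into  x1' = -y1, y1' = x1, i.e. the derivatives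
    of x1, y1 along the vector field (P,Q) equal -y1 and x1 respectively,
    as identities of (convergent) power series. *)
Definition linearizable (P Q : series) : Prop :=
  exists X1 Y1 : series,
    X1 0%nat 0%nat = C0 /\ X1 1%nat 0%nat = C1 /\ X1 0%nat 1%nat = C0 /\
    Y1 0%nat 0%nat = C0 /\ Y1 1%nat 0%nat = C0 /\ Y1 0%nat 1%nat = C1 /\
    convergent X1 /\ convergent Y1 /\
    (forall i j : nat,
        sadd (smul (sdx X1) P) (smul (sdy X1) Q) i j = sopp Y1 i j) /\
    (forall i j : nat,
        sadd (smul (sdx Y1) P) (smul (sdy Y1) Q) i j = X1 i j).

Definition Pcub (a02 a03 : CC) : series :=
  sadd (mono (Copp C1) 0 1) (sadd (mono a02 0 2) (mono a03 0 3)).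
Definition Qcub (b20 b11 b02 b30 b21 b12 : CC) : series :=
  sadd (mono C1 1 0)
  (sadd (mono b20 2 0) (sadd (mono b11 1 1) (sadd (mono b02 0 2)
  (sadd (mono b30 3 0) (sadd (mono b21 2 1) (mono b12 1 2)))))).

Declare Scope C_scope.
Delimit Scope C_scope with C.
Notation "x + y" := (Cadd x y) : C_scope.
Notation "x * y" := (Cmul x y) : C_scope.
Notation "- x" := (Copp x) : C_scope.
Notation "x - y" := (Cadd x (Copp y)) : C_scope.

(* Each family is linearized by explicit coordinates, after writing its parameters
   through a square root j of -1 (families 1 and 4) or a rescaling (2 and 3).
   For families 2, 3 and 4 the coordinates are rational:
     (x, y + k x^2) / (1 + k y + k^2 x^2),   (x + c y^2, y) / (1 - 2 c x - 2 c^2 y^2),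
     (x + 2 u p^2, y + j u p^2) / (1 + 12 u x + 6 u j y)^2  with p = 2 x + j y,
   and the equations x1' = -y1, y1' = x1 reduce by the quotient rule to polynomial
   identities.  In family 1, z = x + j y satisfies z' = j z (1 + b z), so
   Z = z / (1 + b z) satisfies Z' = j Z, and W = x - j y + H(z) satisfies W' = -j W
   as soon as the one-variable series H solves z (1 + b z) H' + H = b z^2, whose
   coefficients grow at most geometrically; then (Z + W)/2 and j (W - Z)/2 linearize.
   Power series are handled formally as a commutative ring with the Lie derivative
   as a derivation; convergence is a geometric bound on the coefficients, preserved
   by sums, products, inverses of 1 + polynomial and substitution of x + j y. *)

From Stdlib Require Import Reals Lra Lia Psatz FunctionalExtensionality List.
Import ListNotations.
Open Scope R_scope.

Definition Csub (z w : CC) : CC := Cadd z (Copp w).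

Lemma CC_ring_theory : ring_theory C0 C1 Cadd Cmul Csub Copp (@eq CC).
Proof.
  constructor; intros; repeat match goal with z : CC |- _ => destruct z end;
    unfold Csub, Cadd, Cmul, Copp, C0, C1; cbn; f_equal; ring.
Qed.
Add Ring CC_ring : CC_ring_theory.

Ltac Cexpand :=
  repeat match goal with z : CC |- _ => destruct z as [?re ?im] end;
  unfold natC, Csub, Cadd, Cmul, Copp, C0, C1 in *; cbn [Cre Cim INR] in *;
  repeat match goal with H : mkC _ _ = mkC _ _ |- _ => injection H; clear H; intros end;
  f_equal.

Lemma natC_0 : natC 0 = C0.
Proof. reflexivity. Qed.

Lemma natC_S (n : nat) : natC (S n) = Cadd (natC n) C1.
Proof. unfold natC, Cadd, C1; cbn [Cre Cim]; rewrite S_INR; f_equal; ring. Qed.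

Lemma natC_add (m n : nat) : natC (m + n) = Cadd (natC m) (natC n).
Proof. unfold natC, Cadd; cbn [Cre Cim]; rewrite plus_INR; f_equal; ring. Qed.

Lemma natC_mul_inv (n : nat) : Cmul (natC (S n)) (mkC (/ INR (S n)) 0) = C1.
Proof.
  unfold natC, Cmul, C1; cbn [Cre Cim]; f_equal; [field; apply not_0_INR; lia | ring].
Qed.

Lemma Cnorm_ge0 (z : CC) : 0 <= Cnorm z.
Proof. apply sqrt_pos. Qed.

Lemma Cnorm_C0 : Cnorm C0 = 0.
Proof. unfold Cnorm, C0; cbn [Cre Cim]; rewrite Rmult_0_l, Rplus_0_l; apply sqrt_0. Qed.

Lemma Cnorm_C1 : Cnorm C1 = 1.
Proof. unfold Cnorm, C1; cbn [Cre Cim]; rewrite Rmult_1_l, Rmult_0_l, Rplus_0_r; apply sqrt_1. Qed.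

Lemma Cnorm_real (r : R) : 0 <= r -> Cnorm (mkC r 0) = r.
Proof.
  intro Hr; unfold Cnorm; cbn [Cre Cim]; rewrite Rmult_0_l, Rplus_0_r; now apply sqrt_square.
Qed.

Lemma Cnorm_natC (n : nat) : Cnorm (natC n) = INR n.
Proof. apply Cnorm_real, pos_INR. Qed.

Lemma Cnorm_opp (z : CC) : Cnorm (Copp z) = Cnorm z.
Proof. destruct z as [a b]; unfold Cnorm, Copp; cbn [Cre Cim]; f_equal; ring. Qed.

Lemma Cnorm_mul (z w : CC) : Cnorm (Cmul z w) = Cnorm z * Cnorm w.
Proof.
  destruct z as [a b], w as [c d]; unfold Cnorm, Cmul; cbn [Cre Cim].
  rewrite <- sqrt_mult_alt by nra; f_equal; ring.
Qed.

Lemma Cnorm_add (z w : CC) : Cnorm (Cadd z w) <= Cnorm z + Cnorm w.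
Proof.
  destruct z as [a b], w as [c d]; unfold Cnorm, Cadd; cbn [Cre Cim].
  set (A := a * a + b * b); set (B := c * c + d * d).
  assert (HA : 0 <= A) by (unfold A; nra); assert (HB : 0 <= B) by (unfold B; nra).
  pose proof (sqrt_pos A); pose proof (sqrt_pos B).
  pose proof (sqrt_sqrt A HA); pose proof (sqrt_sqrt B HB).
  (* Cauchy-Schwarz, from (a d - b c)^2 >= 0 *)
  assert (Hcs : a * c + b * d <= sqrt A * sqrt B).
  { rewrite <- sqrt_mult by assumption.
    destruct (Rle_dec (a * c + b * d) 0) as [Hle|Hgt]; [pose proof (sqrt_pos (A * B)); lra|].
    rewrite <- (sqrt_square (a * c + b * d)) by lra.
    apply sqrt_le_1_alt; unfold A, B.
    pose proof (Rle_0_sqr (a * d - b * c)); unfold Rsqr in *; nra. }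
  rewrite <- (sqrt_square (sqrt A + sqrt B)) by lra.
  apply sqrt_le_1_alt; unfold A, B in *; nra.
Qed.

Lemma Cnorm_eq0 (z : CC) : Cnorm z = 0 -> z = C0.
Proof.
  destruct z as [a b]; unfold Cnorm, C0; cbn [Cre Cim]; intro H.
  apply sqrt_eq_0 in H; [|nra]; f_equal; nra.
Qed.

Lemma Cnorm_sqrt_m1 (j : CC) : Cmul j j = Copp C1 -> Cnorm j = 1.
Proof.
  intro H; assert (E : Cnorm j * Cnorm j = 1)
    by (rewrite <- Cnorm_mul, H, Cnorm_opp; apply Cnorm_C1).
  pose proof (Cnorm_ge0 j); nra.
Qed.

Lemma Cmul_eq0 (z w : CC) : Cmul z w = C0 -> z = C0 \/ w = C0.
Proof.
  intro H; apply (f_equal Cnorm) in H; rewrite Cnorm_mul, Cnorm_C0 in H.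
  destruct (Rmult_integral _ _ H); [left | right]; now apply Cnorm_eq0.
Qed.

Lemma Csub_eq0 (z w : CC) : Csub z w = C0 -> z = w.
Proof.
  intro H; transitivity (Cadd (Csub z w) w); [ring|]; rewrite H; ring.
Qed.

Lemma Cmul_natC_S_reg_l (n : nat) (z w : CC) :
  Cmul (natC (S n)) z = Cmul (natC (S n)) w -> z = w.
Proof.
  intro H; apply Csub_eq0.
  assert (E : Cmul (natC (S n)) (Csub z w) = C0)
    by (transitivity (Csub (Cmul (natC (S n)) z) (Cmul (natC (S n)) w)); [ring|];
        rewrite H; ring).
  destruct (Cmul_eq0 _ _ E) as [E'|E']; [|exact E'].
  apply (f_equal Cre) in E'; contradict E'; apply not_0_INR; lia.
Qed.

Lemma sum_sq_eq0 (a c : CC) :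
  Cadd (Cmul a a) (Cmul c c) = C0 -> exists j, Cmul j j = Copp C1 /\ a = Cmul j c.
Proof.
  intro H; set (i := mkC 0 1).
  assert (Hi : Cmul i i = Copp C1) by (unfold i; Cexpand; ring).
  assert (F : Cmul (Csub a (Cmul i c)) (Cadd a (Cmul i c)) = C0)
    by (rewrite <- H; ring [Hi]).
  destruct (Cmul_eq0 _ _ F) as [E|E]; [exists i | exists (Copp i)]; split.
  - exact Hi.
  - apply Csub_eq0, E.
  - rewrite <- Hi; ring.
  - apply Csub_eq0; rewrite <- E; unfold Csub; ring.
Qed.

Lemma Csum_ext (n : nat) (f g : nat -> CC) :
  (forall a, (a < n)%nat -> f a = g a) -> Csum n f = Csum n g.
Proof.
  revert f g; induction n as [|n IH]; intros f g H; cbn [Csum]; [reflexivity|].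
  rewrite (IH f g), (H n) by (lia || intros; apply H; lia); reflexivity.
Qed.

Lemma Csum_add (n : nat) (f g : nat -> CC) :
  Csum n (fun a => Cadd (f a) (g a)) = Cadd (Csum n f) (Csum n g).
Proof. induction n as [|n IH]; cbn [Csum]; [ring | rewrite IH; ring]. Qed.

Lemma Csum_mul_l (n : nat) (c : CC) (f : nat -> CC) :
  Csum n (fun a => Cmul c (f a)) = Cmul c (Csum n f).
Proof. induction n as [|n IH]; cbn [Csum]; [ring | rewrite IH; ring]. Qed.

Lemma Csum_S_l (n : nat) (f : nat -> CC) :
  Csum (S n) f = Cadd (f 0%nat) (Csum n (fun a => f (S a))).
Proof.
  revert f; induction n as [|n IH]; intro f; cbn [Csum] in *; [ring|].
  rewrite IH; ring.
Qed.

Lemma Csum_eq0 (n : nat) (f : nat -> CC) :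
  (forall a, (a < n)%nat -> f a = C0) -> Csum n f = C0.
Proof.
  intro H; transitivity (Csum n (fun _ => C0)); [now apply Csum_ext|].
  induction n as [|n IH]; cbn [Csum]; [reflexivity|]; rewrite IH by (intros; apply H; lia); ring.
Qed.

Lemma Csum_single (n m : nat) (f : nat -> CC) :
  (m < n)%nat -> (forall a, (a < n)%nat -> a <> m -> f a = C0) -> Csum n f = f m.
Proof.
  revert f; induction n as [|n IH]; intros f Hm H; [lia|]; cbn [Csum].
  destruct (Nat.eq_dec m n) as [->|Hne].
  - rewrite Csum_eq0 by (intros; apply H; lia); ring.
  - rewrite (IH f), (H n) by (lia || intros; apply H; lia); ring.
Qed.

(* The two halves of [S n * sum_a K a (S n - a)] obtained from [S n = a + (S n - a)]. *)
Lemma Csum_leibniz (n : nat) (K : nat -> nat -> CC) :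
  Cmul (natC (S n)) (Csum (S (S n)) (fun a => K a (S n - a)%nat)) =
  Cadd (Csum (S n) (fun a => Cmul (natC (S a)) (K (S a) (n - a)%nat)))
       (Csum (S n) (fun a => Cmul (natC (S (n - a))) (K a (S (n - a))))).
Proof.
  transitivity (Cadd (Csum (S (S n)) (fun a => Cmul (natC a) (K a (S n - a)%nat)))
                     (Csum (S (S n)) (fun a => Cmul (natC (S n - a)) (K a (S n - a)%nat)))).
  - rewrite <- Csum_add, <- Csum_mul_l; apply Csum_ext; intros a Ha.
    replace (natC (S n)) with (Cadd (natC a) (natC (S n - a)))
      by (rewrite <- natC_add; f_equal; lia).
    ring.
  - f_equal.
    + rewrite Csum_S_l, natC_0; cbn [Nat.sub]; ring.
    + change (Csum (S (S n)) ?f) with (Cadd (Csum (S n) f) (f (S n))); cbv beta.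
      rewrite Nat.sub_diag, natC_0.
      transitivity (Csum (S n) (fun a => Cmul (natC (S n - a)) (K a (S n - a)%nat))); [ring|].
      apply Csum_ext; intros a Ha; replace (S n - a)%nat with (S (n - a)) by lia; reflexivity.
Qed.

Fixpoint Rsum (n : nat) (f : nat -> R) : R :=
  match n with O => 0 | S k => Rsum k f + f k end.

Lemma Rsum_le (n : nat) (f g : nat -> R) :
  (forall a, (a < n)%nat -> f a <= g a) -> Rsum n f <= Rsum n g.
Proof.
  induction n as [|n IH]; intro H; cbn [Rsum]; [lra|].
  pose proof (H n ltac:(lia)); pose proof (IH ltac:(intros; apply H; lia)); lra.
Qed.

Lemma Rsum_const (n : nat) (c : R) : Rsum n (fun _ => c) = INR n * c.
Proof. induction n as [|n IH]; cbn [Rsum]; [cbn; ring | rewrite IH, S_INR; ring]. Qed.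

Lemma Cnorm_Csum (n : nat) (f : nat -> CC) : Cnorm (Csum n f) <= Rsum n (fun a => Cnorm (f a)).
Proof.
  induction n as [|n IH]; cbn [Csum Rsum]; [rewrite Cnorm_C0; lra|].
  pose proof (Cnorm_add (Csum n f) (f n)); lra.
Qed.

(** * The ring of formal power series *)

Definition szero : series := fun _ _ => C0.
Definition sone : series := mono C1 0 0.
Definition ssub (F G : series) : series := sadd F (sopp G).

Lemma series_ext (F G : series) : (forall i j, F i j = G i j) -> F = G.
Proof.
  intro H; apply functional_extensionality; intro i;
  apply functional_extensionality; intro j; apply H.
Qed.

Lemma smul_mono_l (c : CC) (m n : nat) (F : series) (i j : nat) :
  smul (mono c m n) F i j =
  if andb (Nat.leb m i) (Nat.leb n j) then Cmul c (F (i - m)%nat (j - n)%nat) else C0.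
Proof.
  unfold smul, mono.
  destruct (Nat.leb_spec m i), (Nat.leb_spec n j); cbn [andb];
    try (apply Csum_eq0; intros a Ha; apply Csum_eq0; intros b Hb;
         destruct (Nat.eqb_spec a m), (Nat.eqb_spec b n); cbn [andb]; try ring; lia).
  rewrite (Csum_single (S i) m); [|lia|].
  - rewrite (Csum_single (S j) n); [|lia|].
    + now rewrite !Nat.eqb_refl.
    + intros b Hb Hne; rewrite Nat.eqb_refl; destruct (Nat.eqb_spec b n); [lia|]; cbn; ring.
  - intros a Ha Hne; apply Csum_eq0; intros b Hb.
    destruct (Nat.eqb_spec a m); [lia|]; cbn; ring.
Qed.

Lemma smul_1_l (F : series) : smul sone F = F.
Proof.
  apply series_ext; intros i j; unfold sone; rewrite smul_mono_l; cbn.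
  rewrite !Nat.sub_0_r; ring.
Qed.

Lemma sdx_smul (F G : series) : sdx (smul F G) = sadd (smul (sdx F) G) (smul F (sdx G)).
Proof.
  apply series_ext; intros i j; unfold sdx at 1, smul at 1.
  rewrite (Csum_leibniz i (fun a c => Csum (S j) (fun b => Cmul (F a b) (G c (j - b)%nat)))).
  unfold sadd, smul, sdx; f_equal; apply Csum_ext; intros a Ha;
    rewrite <- Csum_mul_l; apply Csum_ext; intros b Hb; ring.
Qed.

Lemma sdy_smul (F G : series) : sdy (smul F G) = sadd (smul (sdy F) G) (smul F (sdy G)).
Proof.
  apply series_ext; intros i j; unfold sdy at 1, smul at 1.
  rewrite <- Csum_mul_l; unfold sadd, smul, sdy; rewrite <- Csum_add.
  apply Csum_ext; intros a Ha.
  rewrite (Csum_leibniz j (fun b c => Cmul (F a b) (G (i - a)%nat c))).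
  f_equal; apply Csum_ext; intros b Hb; ring.
Qed.

Lemma coef_S_l_of_sdx (F G : series) (i j : nat) :
  sdx F i j = sdx G i j -> F (S i) j = G (S i) j.
Proof. apply Cmul_natC_S_reg_l. Qed.

Lemma coef_S_r_of_sdy (F G : series) (i j : nat) :
  sdy F i j = sdy G i j -> F i (S j) = G i (S j).
Proof. apply Cmul_natC_S_reg_l. Qed.

Lemma smul_00 (F G : series) : smul F G 0%nat 0%nat = Cmul (F 0%nat 0%nat) (G 0%nat 0%nat).
Proof. unfold smul; cbn; ring. Qed.

Lemma smul_10 (F G : series) : smul F G 1%nat 0%nat =
  Cadd (Cmul (F 0%nat 0%nat) (G 1%nat 0%nat)) (Cmul (F 1%nat 0%nat) (G 0%nat 0%nat)).
Proof. unfold smul; cbn; ring. Qed.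

Lemma smul_01 (F G : series) : smul F G 0%nat 1%nat =
  Cadd (Cmul (F 0%nat 0%nat) (G 0%nat 1%nat)) (Cmul (F 0%nat 1%nat) (G 0%nat 0%nat)).
Proof. unfold smul; cbn; ring. Qed.

(* Commutativity and associativity of the Cauchy product, by induction on the
   total degree: both sides have the same constant term and, by the Leibniz
   rule, the same derivatives. *)
Lemma smulC (F G : series) : smul F G = smul G F.
Proof.
  apply series_ext; intros i j; remember (i + j)%nat as n eqn:Hn.
  revert F G i j Hn; induction n as [|n IH]; intros F G i j Hn.
  - replace i with 0%nat by lia; replace j with 0%nat by lia; rewrite !smul_00; ring.
  - destruct i as [|i]; [destruct j as [|j]; [lia|]|].
    + apply coef_S_r_of_sdy; rewrite !sdy_smul; unfold sadd.
      rewrite (IH (sdy F) G), (IH F (sdy G)) by lia; ring.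
    + apply coef_S_l_of_sdx; rewrite !sdx_smul; unfold sadd.
      rewrite (IH (sdx F) G), (IH F (sdx G)) by lia; ring.
Qed.

Lemma smulDl (F G H : series) : smul (sadd F G) H = sadd (smul F H) (smul G H).
Proof.
  apply series_ext; intros i j; unfold smul, sadd; rewrite <- Csum_add.
  apply Csum_ext; intros; rewrite <- Csum_add; apply Csum_ext; intros; ring.
Qed.

Lemma smulDr (F G H : series) : smul H (sadd F G) = sadd (smul H F) (smul H G).
Proof. rewrite !(smulC H); apply smulDl. Qed.

Lemma smulA (F G H : series) : smul F (smul G H) = smul (smul F G) H.
Proof.
  apply series_ext; intros i j; remember (i + j)%nat as n eqn:Hn.
  revert F G H i j Hn; induction n as [|n IH]; intros F G H i j Hn.
  - replace i with 0%nat by lia; replace j with 0%nat by lia; rewrite !smul_00; ring.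
  - destruct i as [|i]; [destruct j as [|j]; [lia|]|].
    + apply coef_S_r_of_sdy; rewrite !sdy_smul, !smulDr, !smulDl; unfold sadd.
      rewrite (IH (sdy F) G H), (IH F (sdy G) H), (IH F G (sdy H)) by lia; ring.
    + apply coef_S_l_of_sdx; rewrite !sdx_smul, !smulDr, !smulDl; unfold sadd.
      rewrite (IH (sdx F) G H), (IH F (sdx G) H), (IH F G (sdx H)) by lia; ring.
Qed.

Lemma series_ring_theory : ring_theory szero sone sadd smul ssub sopp (@eq series).
Proof.
  constructor; intros;
    try (apply series_ext; intros; unfold sadd, szero, sopp, ssub; ring).
  - apply smul_1_l.
  - apply smulC.
  - apply smulA.
  - apply smulDl.
  - reflexivity.
Qed.
Add Ring series_ring : series_ring_theory.

Definition sconst (c : CC) : series := mono c 0 0.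
Definition sX : series := mono C1 1 0.
Definition sY : series := mono C1 0 1.

Lemma smul_sconst (c : CC) (F : series) (i j : nat) : smul (sconst c) F i j = Cmul c (F i j).
Proof. unfold sconst; rewrite smul_mono_l; cbn; now rewrite !Nat.sub_0_r. Qed.

Lemma mono_mul (c d : CC) (m n p q : nat) :
  smul (mono c m n) (mono d p q) = mono (Cmul c d) (m + p) (n + q).
Proof.
  apply series_ext; intros i j; rewrite smul_mono_l; unfold mono.
  destruct (Nat.leb_spec m i), (Nat.leb_spec n j); cbn [andb];
  destruct (Nat.eqb_spec (i - m) p), (Nat.eqb_spec (j - n) q),
    (Nat.eqb_spec i (m + p)), (Nat.eqb_spec j (n + q)); cbn [andb]; try ring; lia.
Qed.

Lemma mono_sX (c : CC) (m n : nat) : mono c (S m) n = smul sX (mono c m n).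
Proof. unfold sX; rewrite mono_mul; f_equal; ring. Qed.

Lemma mono_sY (c : CC) (n : nat) : mono c 0 (S n) = smul sY (mono c 0 n).
Proof. unfold sY; rewrite mono_mul; f_equal; ring. Qed.

Lemma sconst_add (a b : CC) : sconst (Cadd a b) = sadd (sconst a) (sconst b).
Proof.
  apply series_ext; intros; unfold sconst, sadd, mono; destruct (andb _ _); ring.
Qed.

Lemma sconst_mul (a b : CC) : sconst (Cmul a b) = smul (sconst a) (sconst b).
Proof. unfold sconst; now rewrite mono_mul. Qed.

Lemma sconst_opp (a : CC) : sconst (Copp a) = sopp (sconst a).
Proof.
  apply series_ext; intros; unfold sconst, sopp, mono; destruct (andb _ _); ring.
Qed.

Lemma sconst_1 : sconst C1 = sone.
Proof. reflexivity. Qed.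

Lemma sconst_0 : sconst C0 = szero.
Proof. apply series_ext; intros; unfold sconst, szero, mono; now destruct (andb _ _). Qed.

Lemma sconst_natC_S (n : nat) : sconst (natC (S n)) = sadd (sconst (natC n)) sone.
Proof. now rewrite natC_S, sconst_add. Qed.

Lemma sconst_natC_0 : sconst (natC 0) = szero.
Proof. exact sconst_0. Qed.

(* Turns every constant built from [natC], [Cadd], [Cmul], [Copp] into ring
   operations on series, so that [ring] can see through it. *)
Ltac sconst_expand :=
  repeat first [ rewrite sconst_natC_S | rewrite sconst_natC_0 | rewrite sconst_add
               | rewrite sconst_mul | rewrite sconst_opp | rewrite sconst_1 | rewrite sconst_0 ].

Lemma sconst_sqrt_m1 (j : CC) : Cmul j j = Copp C1 -> smul (sconst j) (sconst j) = sopp sone.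
Proof. intro Hj; rewrite <- sconst_mul, Hj, sconst_opp; reflexivity. Qed.

Fixpoint spow (F : series) (k : nat) : series :=
  match k with O => sone | S k => smul F (spow F k) end.

Lemma sdx_add (F G : series) : sdx (sadd F G) = sadd (sdx F) (sdx G).
Proof. apply series_ext; intros; unfold sdx, sadd; ring. Qed.

Lemma sdy_add (F G : series) : sdy (sadd F G) = sadd (sdy F) (sdy G).
Proof. apply series_ext; intros; unfold sdy, sadd; ring. Qed.

Lemma sdx_opp (F : series) : sdx (sopp F) = sopp (sdx F).
Proof. apply series_ext; intros; unfold sdx, sopp; ring. Qed.

Lemma sdy_opp (F : series) : sdy (sopp F) = sopp (sdy F).
Proof. apply series_ext; intros; unfold sdy, sopp; ring. Qed.

Lemma sdx_sconst (c : CC) : sdx (sconst c) = szero.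
Proof. apply series_ext; intros; unfold sdx, sconst, szero, mono; cbn; ring. Qed.

Lemma sdy_sconst (c : CC) : sdy (sconst c) = szero.
Proof.
  apply series_ext; intros; unfold sdy, sconst, szero, mono; cbn.
  destruct (Nat.eqb _ 0); cbn; ring.
Qed.

Lemma sdx_sX : sdx sX = sone.
Proof.
  apply series_ext; intros [|[|i]] j; unfold sdx, sX, sone, mono; cbn;
    try (destruct (Nat.eqb j 0); Cexpand; ring); ring.
Qed.

Lemma sdy_sX : sdy sX = szero.
Proof.
  apply series_ext; intros; unfold sdy, sX, szero, mono; cbn.
  destruct (Nat.eqb _ 1); cbn; ring.
Qed.

Lemma sdx_sY : sdx sY = szero.
Proof. apply series_ext; intros; unfold sdx, sY, szero, mono; cbn; ring. Qed.

Lemma sdy_sY : sdy sY = sone.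
Proof.
  apply series_ext; intros i [|[|j]]; unfold sdy, sY, sone, mono; cbn;
    destruct (Nat.eqb i 0); cbn; try (Cexpand; ring); ring.
Qed.

Definition lie (P Q F : series) : series := sadd (smul (sdx F) P) (smul (sdy F) Q).

Section Lie.
Variables P Q : series.

Lemma lie_add (F G : series) : lie P Q (sadd F G) = sadd (lie P Q F) (lie P Q G).
Proof. unfold lie; rewrite sdx_add, sdy_add; ring. Qed.

Lemma lie_opp (F : series) : lie P Q (sopp F) = sopp (lie P Q F).
Proof. unfold lie; rewrite sdx_opp, sdy_opp; ring. Qed.

Lemma lie_mul (F G : series) :
  lie P Q (smul F G) = sadd (smul (lie P Q F) G) (smul F (lie P Q G)).
Proof. unfold lie; rewrite sdx_smul, sdy_smul; ring. Qed.

Lemma lie_sconst (c : CC) : lie P Q (sconst c) = szero.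
Proof. unfold lie; rewrite sdx_sconst, sdy_sconst; ring. Qed.

Lemma lie_szero : lie P Q szero = szero.
Proof. rewrite <- sconst_0 at 1; apply lie_sconst. Qed.

Lemma lie_sone : lie P Q sone = szero.
Proof. apply lie_sconst. Qed.

Lemma lie_sX : lie P Q sX = P.
Proof. unfold lie; rewrite sdx_sX, sdy_sX; ring. Qed.

Lemma lie_sY : lie P Q sY = Q.
Proof. unfold lie; rewrite sdx_sY, sdy_sY; ring. Qed.

Variables D I : series.
Hypothesis DI : smul D I = sone.

Lemma lie_spow_inv (k : nat) :
  lie P Q (spow I k) = sopp (smul (sconst (natC k)) (smul (spow I (S k)) (lie P Q D))).
Proof.
  assert (HI : lie P Q I = sopp (smul (smul I I) (lie P Q D))).
  { assert (H0 : sadd (smul (lie P Q D) I) (smul D (lie P Q I)) = szero)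
      by (rewrite <- lie_mul, DI; apply lie_sone).
    transitivity (sadd (smul I (sadd (smul (lie P Q D) I) (smul D (lie P Q I))))
                       (ssub (smul (lie P Q I) (ssub sone (smul D I)))
                             (smul (smul I I) (lie P Q D))));
      [ring | rewrite H0, DI; ring]. }
  induction k as [|k IH]; cbn [spow].
  - rewrite lie_sone, sconst_natC_0; ring.
  - rewrite lie_mul, HI, IH, sconst_natC_S; cbn [spow]; ring.
Qed.

(* Quotient rule: the Lie derivative of N / D^k is R / D^k as soon as
   N' D - k N D' = R D. *)
Lemma lie_div_pow (k : nat) (N R : series) :
  smul (lie P Q N) D = sadd (smul R D) (smul (sconst (natC k)) (smul N (lie P Q D))) ->
  lie P Q (smul N (spow I k)) = smul R (spow I k).
Proof.
  intro H; rewrite lie_mul, lie_spow_inv.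
  transitivity (sadd (smul (spow I (S k)) (ssub (smul (lie P Q N) D)
                       (smul (sconst (natC k)) (smul N (lie P Q D)))))
                     (smul (lie P Q N) (smul (spow I k) (ssub sone (smul D I))))).
  - cbn [spow]; ring.
  - rewrite H, DI; cbn [spow].
    transitivity (smul (smul R (spow I k)) (smul D I)); [ring | rewrite DI; ring].
Qed.

End Lie.

Ltac lie_expand :=
  repeat first [ rewrite lie_add | rewrite lie_mul | rewrite lie_opp | rewrite lie_sconst
               | rewrite lie_szero | rewrite lie_sone | rewrite lie_sX | rewrite lie_sY ].

(** * Convergent series *)

Definition coef_bound (F : series) (M K : R) : Prop :=
  forall i j : nat, Cnorm (F i j) <= M * K ^ (i + j).

Lemma coef_bound_nonneg (F : series) (M K : R) : coef_bound F M K -> 0 <= M.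
Proof.
  intro H; specialize (H 0%nat 0%nat); cbn in H.
  pose proof (Cnorm_ge0 (F 0%nat 0%nat)); lra.
Qed.

Lemma convergent_iff_bound (F : series) :
  convergent F <-> exists M K, 1 <= K /\ coef_bound F M K.
Proof.
  split.
  - intros (r & M & Hr & H); exists M, (Rmax 1 (/ r)); split; [apply Rmax_l|].
    intros i j; specialize (H i j).
    assert (Hir : 0 < / r) by (apply Rinv_0_lt_compat, Hr).
    assert (Hrn : 0 < r ^ (i + j)) by (apply pow_lt, Hr).
    assert (HM : 0 <= M) by (pose proof (Cnorm_ge0 (F i j)); nra).
    assert (Hpow : (/ r) ^ (i + j) <= Rmax 1 (/ r) ^ (i + j))
      by (apply pow_incr; split; [lra | apply Rmax_r]).
    replace (Cnorm (F i j)) with (Cnorm (F i j) * r ^ (i + j) * (/ r) ^ (i + j))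
      by (rewrite Rmult_assoc, <- Rpow_mult_distr, Rinv_r, pow1 by lra; ring).
    assert (0 < (/ r) ^ (i + j)) by (apply pow_lt, Hir).
    apply Rle_trans with (M * (/ r) ^ (i + j)); [apply Rmult_le_compat_r; lra | nra].
  - intros (M & K & HK & H); exists (/ K), M; split; [apply Rinv_0_lt_compat; lra|].
    intros i j; specialize (H i j).
    assert (0 <= (/ K) ^ (i + j)) by (apply pow_le; left; apply Rinv_0_lt_compat; lra).
    apply Rle_trans with (M * K ^ (i + j) * (/ K) ^ (i + j)); [apply Rmult_le_compat_r; auto|].
    rewrite Rmult_assoc, <- Rpow_mult_distr, Rinv_r, pow1 by lra; lra.
Qed.

Lemma coef_bound_mono (F : series) (M K M' K' : R) :
  coef_bound F M K -> 1 <= K -> K <= K' -> M <= M' -> coef_bound F M' K'.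
Proof.
  intros H HK HKK' HM i j; eapply Rle_trans; [apply H|].
  pose proof (coef_bound_nonneg F M K H).
  assert (K ^ (i + j) <= K' ^ (i + j)) by (apply pow_incr; lra).
  assert (0 <= K ^ (i + j)) by (apply pow_le; lra).
  assert (1 <= K' ^ (i + j)) by (apply pow_R1_Rle; lra).
  nra.
Qed.

Lemma convergent_common_bound (F G : series) : convergent F -> convergent G ->
  exists M M' K, 1 <= K /\ coef_bound F M K /\ coef_bound G M' K.
Proof.
  rewrite !convergent_iff_bound; intros (M & K & HK & HF) (M' & K' & HK' & HG).
  exists M, M', (Rmax K K'); repeat split.
  - eapply Rle_trans; [apply HK | apply Rmax_l].
  - eapply coef_bound_mono; eauto; [apply Rmax_l | lra].
  - eapply coef_bound_mono; eauto; [apply Rmax_r | lra].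
Qed.

Lemma convergent_add (F G : series) : convergent F -> convergent G -> convergent (sadd F G).
Proof.
  intros HF HG; destruct (convergent_common_bound F G HF HG) as (M & M' & K & HK & BF & BG).
  apply convergent_iff_bound; exists (M + M'), K; split; [exact HK|].
  intros i j; unfold sadd; eapply Rle_trans; [apply Cnorm_add|].
  specialize (BF i j); specialize (BG i j); lra.
Qed.

Lemma convergent_opp (F : series) : convergent F -> convergent (sopp F).
Proof.
  intros (r & M & Hr & H); exists r, M; split; [exact Hr|].
  intros i j; unfold sopp; rewrite Cnorm_opp; apply H.
Qed.

Lemma INR_S_le_pow2 (n : nat) : INR (S n) <= 2 ^ n.
Proof.
  induction n as [|n IH]; [cbn; lra|].
  rewrite S_INR; cbn [pow]; pose proof (pow_R1_Rle 2 n ltac:(lra)); lra.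
Qed.

(* The (i, j) coefficient of a product has (i + 1)(j + 1) <= 2 ^ (i + j) terms. *)
Lemma coef_bound_mul (F G : series) (M M' K : R) : 1 <= K ->
  coef_bound F M K -> coef_bound G M' K -> coef_bound (smul F G) (M * M') (2 * K).
Proof.
  intros HK HF HG i j; unfold smul.
  pose proof (coef_bound_nonneg _ _ _ HF); pose proof (coef_bound_nonneg _ _ _ HG).
  eapply Rle_trans; [apply Cnorm_Csum|].
  apply Rle_trans with (Rsum (S i) (fun a => Rsum (S j) (fun b => M * M' * K ^ (i + j)))).
  - apply Rsum_le; intros a Ha; eapply Rle_trans; [apply Cnorm_Csum|].
    apply Rsum_le; intros b Hb; rewrite Cnorm_mul.
    replace (M * M' * K ^ (i + j)) with ((M * K ^ (a + b)) * (M' * K ^ ((i - a) + (j - b))))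
      by (rewrite <- Rmult_assoc, (Rmult_comm _ M'), <- Rmult_assoc, Rmult_assoc, <- pow_add;
          f_equal; [ring | f_equal; lia]).
    apply Rmult_le_compat; auto using Cnorm_ge0.
  - rewrite !Rsum_const, Rpow_mult_distr, !pow_add.
    pose proof (INR_S_le_pow2 i); pose proof (INR_S_le_pow2 j).
    pose proof (pos_INR (S i)); pose proof (pos_INR (S j)).
    assert (0 <= K ^ i) by (apply pow_le; lra); assert (0 <= K ^ j) by (apply pow_le; lra).
    assert (0 <= M * M' * (K ^ i * K ^ j)) by (apply Rmult_le_pos; [nra | nra]).
    replace (INR (S i) * (INR (S j) * (M * M' * (K ^ i * K ^ j))))
      with ((INR (S i) * INR (S j)) * (M * M' * (K ^ i * K ^ j))) by ring.
    replace (M * M' * (2 ^ i * 2 ^ j * (K ^ i * K ^ j)))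
      with ((2 ^ i * 2 ^ j) * (M * M' * (K ^ i * K ^ j))) by ring.
    apply Rmult_le_compat_r; [assumption | apply Rmult_le_compat; assumption].
Qed.

Lemma convergent_mul (F G : series) : convergent F -> convergent G -> convergent (smul F G).
Proof.
  intros HF HG; destruct (convergent_common_bound F G HF HG) as (M & M' & K & HK & BF & BG).
  apply convergent_iff_bound; exists (M * M'), (2 * K); split; [lra|].
  now apply coef_bound_mul.
Qed.

Lemma convergent_mono (c : CC) (m n : nat) : convergent (mono c m n).
Proof.
  apply convergent_iff_bound; exists (Cnorm c), 1; split; [lra|].
  intros i j; rewrite pow1, Rmult_1_r; unfold mono.
  destruct (andb _ _); [lra | rewrite Cnorm_C0; apply Cnorm_ge0].
Qed.

Definition sgeom (G : series) (N : nat) : series :=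
  fun i j => Csum (S N) (fun k => spow G k i j).

(* Since [(-F)^k] has order at least k when [F 0 0 = 0], the coefficient (i, j)
   of [1/(1 + F)] is that of the truncated series up to [k = i + j]. *)
Definition sinv1 (F : series) : series := fun i j => sgeom (sopp F) (i + j) i j.

Section Inverse.
Variable G : series.
Hypothesis G00 : G 0%nat 0%nat = C0.

Lemma spow_order (k i j : nat) : (i + j < k)%nat -> spow G k i j = C0.
Proof.
  revert i j; induction k as [|k IH]; intros i j Hk; [lia|]; cbn [spow]; unfold smul.
  apply Csum_eq0; intros a Ha; apply Csum_eq0; intros b Hb.
  destruct (Nat.eq_dec a 0), (Nat.eq_dec b 0);
    [subst; rewrite G00 | rewrite IH by lia ..]; ring.
Qed.

Lemma sgeom_stable (N i j : nat) : (i + j <= N)%nat -> sgeom G N i j = sgeom G (i + j) i j.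
Proof.
  intro H; replace N with (i + j + (N - (i + j)))%nat by lia.
  induction (N - (i + j))%nat as [|d IH]; [now rewrite Nat.add_0_r|].
  rewrite <- IH, Nat.add_succ_r; unfold sgeom.
  change (Csum (S (S ?m)) ?f) with (Cadd (Csum (S m) f) (f (S m))); cbv beta.
  rewrite (spow_order (S _)) by lia; ring.
Qed.

End Inverse.

Lemma sgeom_mul (G : series) (N : nat) :
  smul (ssub sone G) (sgeom G N) = ssub sone (spow G (S N)).
Proof.
  induction N as [|N IH].
  - replace (sgeom G 0) with sone by (apply series_ext; intros; unfold sgeom; cbn; ring).
    cbn [spow]; ring.
  - replace (sgeom G (S N)) with (sadd (sgeom G N) (spow G (S N)))
      by (apply series_ext; reflexivity).
    rewrite smulDr, IH; cbn [spow]; ring.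
Qed.

Lemma smul_local (A F F' : series) (i j : nat) :
  (forall a b, (a <= i)%nat -> (b <= j)%nat -> F a b = F' a b) -> smul A F i j = smul A F' i j.
Proof.
  intro H; unfold smul; apply Csum_ext; intros a Ha; apply Csum_ext; intros b Hb.
  rewrite H by lia; reflexivity.
Qed.

Lemma sinv1_spec (F : series) : F 0%nat 0%nat = C0 -> smul (sadd sone F) (sinv1 F) = sone.
Proof.
  intro F00; assert (G00 : sopp F 0%nat 0%nat = C0) by (unfold sopp; rewrite F00; ring).
  apply series_ext; intros i j.
  rewrite (smul_local _ (sinv1 F) (sgeom (sopp F) (i + j))).
  - replace (sadd sone F) with (ssub sone (sopp F)) by ring.
    rewrite sgeom_mul; unfold ssub, sadd, sopp; rewrite spow_order by (auto; lia); ring.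
  - intros a b Ha Hb; unfold sinv1; symmetry; rewrite sgeom_stable by (auto; lia); reflexivity.
Qed.

Lemma sinv1_00 (F : series) : sinv1 F 0%nat 0%nat = C1.
Proof. unfold sinv1, sgeom; cbn; ring. Qed.

(** Polynomials are given by lists of monomials [(c, m, n)] standing for [c x^m y^n]. *)

Fixpoint spoly (l : list (CC * nat * nat)) : series :=
  match l with nil => szero | (c, m, n) :: r => sadd (mono c m n) (spoly r) end.

Fixpoint no_const_term (l : list (CC * nat * nat)) : Prop :=
  match l with nil => True | (_, m, n) :: r => (1 <= m + n)%nat /\ no_const_term r end.

Fixpoint l1norm (l : list (CC * nat * nat)) : R :=
  match l with nil => 0 | (c, _, _) :: r => Cnorm c + l1norm r end.

Lemma l1norm_nonneg (l : list (CC * nat * nat)) : 0 <= l1norm l.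
Proof.
  induction l as [|[[c m] n] r IH]; cbn; [lra|]; pose proof (Cnorm_ge0 c); lra.
Qed.

Lemma spoly_00 (l : list (CC * nat * nat)) : no_const_term l -> spoly l 0%nat 0%nat = C0.
Proof.
  induction l as [|[[c m] n] r IH]; cbn; intro H; [reflexivity|]; destruct H as [Hmn Hr].
  unfold sadd; rewrite IH by exact Hr; unfold mono.
  destruct (Nat.eqb_spec 0 m), (Nat.eqb_spec 0 n); cbn; try ring; lia.
Qed.

Lemma Cnorm_smul_spoly (l : list (CC * nat * nat)) (F : series) (i j : nat) (B : R) :
  no_const_term l -> 0 <= B -> (forall a b, (a + b < i + j)%nat -> Cnorm (F a b) <= B) ->
  Cnorm (smul (spoly l) F i j) <= l1norm l * B.
Proof.
  intros Hl HB HF; induction l as [|[[c m] n] r IH]; cbn [spoly l1norm] in *.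
  - replace (smul szero F) with szero by ring; unfold szero; rewrite Cnorm_C0; lra.
  - destruct Hl as [Hmn Hr]; rewrite smulDl; unfold sadd.
    eapply Rle_trans; [apply Cnorm_add|]; rewrite smul_mono_l.
    assert (Cnorm (if andb (Nat.leb m i) (Nat.leb n j)
                   then Cmul c (F (i - m)%nat (j - n)%nat) else C0) <= Cnorm c * B).
    { pose proof (Cnorm_ge0 c).
      destruct (Nat.leb_spec m i), (Nat.leb_spec n j); cbn [andb];
        try (rewrite Cnorm_C0; nra).
      rewrite Cnorm_mul; apply Rmult_le_compat_l; [lra | apply HF; lia]. }
    pose proof (IH Hr); lra.
Qed.

(* From [1/(1 + p) = 1 - p/(1 + p)], by induction on the total degree. *)
Lemma coef_bound_sinv1_spoly (l : list (CC * nat * nat)) :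
  no_const_term l -> coef_bound (sinv1 (spoly l)) 1 (1 + l1norm l).
Proof.
  intro Hl; set (I := sinv1 (spoly l)); set (K := 1 + l1norm l).
  assert (E : I = ssub sone (smul (spoly l) I)).
  { transitivity (ssub (smul (sadd sone (spoly l)) I) (smul (spoly l) I)); [ring|].
    unfold I; rewrite sinv1_spec by (now apply spoly_00); reflexivity. }
  pose proof (l1norm_nonneg l).
  intros i j; rewrite Rmult_1_l; remember (i + j)%nat as n eqn:Hn; revert i j Hn.
  induction n as [n IH] using (well_founded_induction Wf_nat.lt_wf); intros i j Hn.
  rewrite E; unfold ssub, sadd, sopp; eapply Rle_trans; [apply Cnorm_add|]; rewrite Cnorm_opp.
  destruct n as [|n].
  - replace i with 0%nat by lia; replace j with 0%nat by lia.
    rewrite smul_00, spoly_00 by exact Hl; unfold sone, mono; cbn [Nat.eqb andb].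
    rewrite Cnorm_C1; replace (Cmul C0 (I 0%nat 0%nat)) with C0 by ring; rewrite Cnorm_C0; lra.
  - replace (sone i j) with C0
      by (unfold sone, mono; destruct (Nat.eqb_spec i 0), (Nat.eqb_spec j 0); cbn; auto; lia).
    assert (Hn1 : 1 <= K ^ n) by (apply pow_R1_Rle; unfold K; lra).
    assert (Cnorm (smul (spoly l) I i j) <= l1norm l * K ^ n).
    { apply Cnorm_smul_spoly; [exact Hl | lra|]; intros a b Hab.
      eapply Rle_trans; [apply (IH (a + b)%nat); auto; lia|].
      apply Rle_pow; [unfold K; lra | lia]. }
    rewrite Cnorm_C0; cbn [pow]; unfold K in *; nra.
Qed.

Lemma convergent_sinv1_spoly (l : list (CC * nat * nat)) :
  no_const_term l -> convergent (sinv1 (spoly l)).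
Proof.
  intro Hl; apply convergent_iff_bound; exists 1, (1 + l1norm l); split.
  - pose proof (l1norm_nonneg l); lra.
  - now apply coef_bound_sinv1_spoly.
Qed.

(** * Substituting [x + j y] into a series in one variable *)

Lemma binom_n0 (n : nat) : C n 0 = 1.
Proof. unfold C; rewrite Nat.sub_0_r; cbn [Factorial.fact INR]; field; apply INR_fact_neq_0. Qed.

Lemma binom_nn (n : nat) : C n n = 1.
Proof. unfold C; rewrite Nat.sub_diag; cbn [Factorial.fact INR]; field; apply INR_fact_neq_0. Qed.

Lemma binom_S_l (p q : nat) : INR (S p) * C (S (p + q)) (S p) = INR (S (p + q)) * C (p + q) p.
Proof.
  unfold C; replace (S (p + q) - S p)%nat with q by lia; replace (p + q - p)%nat with q by lia.
  rewrite !fact_simpl, !mult_INR.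
  pose proof (INR_fact_neq_0 p); pose proof (INR_fact_neq_0 q).
  assert (INR (S p) <> 0) by (apply not_0_INR; lia); field; auto.
Qed.

Lemma binom_S_r (p q : nat) : INR (S q) * C (S (p + q)) p = INR (S (p + q)) * C (p + q) p.
Proof.
  unfold C; replace (S (p + q) - p)%nat with (S q) by lia; replace (p + q - p)%nat with q by lia.
  rewrite !fact_simpl, !mult_INR.
  pose proof (INR_fact_neq_0 p); pose proof (INR_fact_neq_0 q).
  assert (INR (S q) <> 0) by (apply not_0_INR; lia); field; auto.
Qed.

Lemma binom_bound (n k : nat) : (k <= n)%nat -> 0 <= C n k <= 2 ^ n.
Proof.
  revert k; induction n as [|n IH]; intros k Hk.
  - replace k with 0%nat by lia; rewrite binom_n0; cbn; lra.
  - pose proof (pow_R1_Rle 2 (S n) ltac:(lra)).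
    destruct k as [|k]; [rewrite binom_n0; lra|].
    destruct (Nat.eq_dec k n) as [->|Hne]; [rewrite binom_nn; lra|].
    rewrite <- pascal by lia; pose proof (IH k ltac:(lia)); pose proof (IH (S k) ltac:(lia)).
    cbn [pow]; lra.
Qed.

Fixpoint Cpow (z : CC) (n : nat) : CC :=
  match n with O => C1 | S k => Cmul z (Cpow z k) end.

Lemma Cnorm_Cpow (z : CC) (n : nat) : Cnorm (Cpow z n) = Cnorm z ^ n.
Proof. induction n as [|n IH]; cbn; [apply Cnorm_C1 | now rewrite Cnorm_mul, IH]. Qed.

(** Series in one variable [z] are sequences [nat -> CC]. *)

Definition uder (f : nat -> CC) : nat -> CC := fun n => Cmul (natC (S n)) (f (S n)).

(* multiplication by z *)
Definition ushift (f : nat -> CC) : nat -> CC :=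
  fun n => match n with O => C0 | S k => f k end.

Definition uone : nat -> CC := fun n => match n with O => C1 | S _ => C0 end.

Definition slin (j : CC) : series := sadd sX (smul (sconst j) sY).

(* [f (x + j y)]: the coefficient of [x^p y^q] comes from [z^(p+q)] by the binomial formula. *)
Definition scomp (j : CC) (f : nat -> CC) : series :=
  fun p q => Cmul (Cmul (f (p + q)%nat) (mkC (C (p + q) p) 0)) (Cpow j q).

Lemma sdx_scomp (j : CC) (f : nat -> CC) : sdx (scomp j f) = scomp j (uder f).
Proof.
  apply series_ext; intros p q; unfold sdx, scomp, uder; cbn [Nat.add].
  transitivity (Cmul (Cmul (f (S (p + q))) (Cmul (natC (S p)) (mkC (C (S (p + q)) (S p)) 0)))
                     (Cpow j q)); [ring|].
  replace (Cmul (natC (S p)) (mkC (C (S (p + q)) (S p)) 0))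
    with (Cmul (natC (S (p + q))) (mkC (C (p + q) p) 0)); [ring|].
  unfold natC, Cmul; cbn [Cre Cim]; f_equal; [rewrite <- binom_S_l | ]; ring.
Qed.

Lemma sdy_scomp (j : CC) (f : nat -> CC) :
  sdy (scomp j f) = smul (sconst j) (scomp j (uder f)).
Proof.
  apply series_ext; intros p q; rewrite smul_sconst; unfold sdy, scomp, uder.
  rewrite Nat.add_succ_r; cbn [Cpow].
  transitivity (Cmul (Cmul (Cmul (f (S (p + q))) (Cmul (natC (S q)) (mkC (C (S (p + q)) p) 0)))
                           (Cpow j q)) j); [ring|].
  replace (Cmul (natC (S q)) (mkC (C (S (p + q)) p) 0))
    with (Cmul (natC (S (p + q))) (mkC (C (p + q) p) 0)); [ring|].
  unfold natC, Cmul; cbn [Cre Cim]; f_equal; [rewrite <- binom_S_r | ]; ring.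
Qed.

(* Pascal's rule is the coefficientwise form of [(x + j y) z^n = z^(n+1)]. *)
Lemma scomp_ushift (j : CC) (f : nat -> CC) : scomp j (ushift f) = smul (slin j) (scomp j f).
Proof.
  unfold slin; rewrite smulDl, <- smulA.
  apply series_ext; intros p q; unfold sadd; rewrite smul_sconst; unfold sX, sY.
  rewrite !smul_mono_l; destruct p as [|p], q as [|q]; cbn [andb Nat.leb]; unfold scomp, ushift.
  - cbn; ring.
  - rewrite !Nat.add_0_l, Nat.sub_0_r; cbn [Nat.sub].
    rewrite Nat.sub_0_r, !binom_n0; cbn [Cpow]; ring.
  - rewrite !Nat.add_0_r; cbn [Nat.sub]; rewrite !Nat.sub_0_r, !binom_nn; cbn [Cpow]; ring.
  - cbn [Nat.sub]; rewrite !Nat.sub_0_r.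
    replace (S p + S q)%nat with (S (p + S q)) by lia.
    replace (S p + q)%nat with (p + S q)%nat by lia.
    rewrite <- pascal by lia; cbn [Cpow].
    replace (mkC (C (p + S q) p + C (p + S q) (S p)) 0)
      with (Cadd (mkC (C (p + S q) p) 0) (mkC (C (p + S q) (S p)) 0))
      by (unfold Cadd; cbn [Cre Cim]; f_equal; ring).
    ring.
Qed.

Lemma lie_scomp (P Q : series) (j : CC) (f : nat -> CC) :
  lie P Q (scomp j f) = smul (scomp j (uder f)) (lie P Q (slin j)).
Proof.
  unfold lie at 1; rewrite sdx_scomp, sdy_scomp.
  unfold slin; lie_expand; ring.
Qed.

Lemma scomp_add (j : CC) (f g : nat -> CC) :
  scomp j (fun n => Cadd (f n) (g n)) = sadd (scomp j f) (scomp j g).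
Proof. apply series_ext; intros; unfold scomp, sadd; ring. Qed.

Lemma scomp_scale (j c : CC) (f : nat -> CC) :
  scomp j (fun n => Cmul c (f n)) = smul (sconst c) (scomp j f).
Proof. apply series_ext; intros; rewrite smul_sconst; unfold scomp; ring. Qed.

Lemma scomp_opp (j : CC) (f : nat -> CC) : scomp j (fun n => Copp (f n)) = sopp (scomp j f).
Proof. apply series_ext; intros; unfold scomp, sopp; ring. Qed.

Lemma scomp_uone (j : CC) : scomp j uone = sone.
Proof.
  apply series_ext; intros [|p] [|q]; unfold scomp, uone, sone, mono; cbn [Nat.add Nat.eqb andb];
    try ring.
  rewrite binom_n0; cbn [Cpow]; Cexpand; ring.
Qed.

Lemma convergent_scomp (j : CC) (f : nat -> CC) (B : R) :
  Cnorm j = 1 -> 1 <= B -> (forall n, Cnorm (f n) <= B ^ n) -> convergent (scomp j f).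
Proof.
  intros Hj HB Hf; apply convergent_iff_bound; exists 1, (2 * B); split; [lra|].
  intros p q; unfold scomp.
  pose proof (binom_bound (p + q) p ltac:(lia)) as Hbin.
  rewrite !Cnorm_mul, Cnorm_Cpow, Hj, pow1, Cnorm_real by lra.
  pose proof (Hf (p + q)%nat); pose proof (Cnorm_ge0 (f (p + q)%nat)).
  assert (0 <= B ^ (p + q)) by (apply pow_le; lra).
  rewrite Rpow_mult_distr, Rmult_1_r, Rmult_1_l, Rmult_comm.
  apply Rmult_le_compat; lra.
Qed.

(** The correction term of the first family: the solution of
    [z (1 + b z) H' + H = b z^2]. *)

Fixpoint hsol (b : CC) (n : nat) : CC :=
  match n with
  | O => C0
  | S m => Cmul (mkC (/ INR (S (S m))) 0)
                (Csub (if Nat.eqb m 1 then b else C0) (Cmul b (Cmul (natC m) (hsol b m))))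
  end.

Lemma hsol_ode (b : CC) (n : nat) :
  Cadd (ushift (uder (hsol b)) n) (Cmul b (ushift (ushift (uder (hsol b))) n)) =
  Csub (Cmul b (ushift (ushift uone) n)) (hsol b n).
Proof.
  destruct n as [|[|m]]; unfold ushift, uder, uone.
  - cbn; ring.
  - cbn; ring.
  - set (X := Csub (if Nat.eqb (S m) 1 then b else C0) (Cmul b (Cmul (natC (S m)) (hsol b (S m))))).
    assert (Hc : Cmul (natC (S (S (S m)))) (hsol b (S (S m))) = X).
    { change (hsol b (S (S m))) with (Cmul (mkC (/ INR (S (S (S m)))) 0) X).
      transitivity (Cmul (Cmul (natC (S (S (S m)))) (mkC (/ INR (S (S (S m)))) 0)) X); [ring|].
      rewrite natC_mul_inv; ring. }
    rewrite natC_S in Hc.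
    set (delta := match m with O => C1 | S _ => C0 end).
    replace X with (Csub (Cmul b delta) (Cmul b (Cmul (natC (S m)) (hsol b (S m))))) in Hc
      by (unfold X, delta; destruct m; cbn; ring).
    set (t := Cmul b (Cmul (natC (S m)) (hsol b (S m)))) in *.
    replace (Cmul b delta) with (Cadd (Csub (Cmul b delta) t) t) by ring.
    rewrite <- Hc; ring.
Qed.

Lemma hsol_bound (b : CC) (n : nat) : Cnorm (hsol b n) <= (1 + Cnorm b) ^ n.
Proof.
  set (B := 1 + Cnorm b); pose proof (Cnorm_ge0 b).
  induction n as [|n IH]; [cbn; rewrite Cnorm_C0; lra|].
  cbn [hsol]; rewrite Cnorm_mul, Cnorm_real by (left; apply Rinv_0_lt_compat, lt_0_INR; lia).
  assert (HBn : 1 <= B ^ n) by (apply pow_R1_Rle; unfold B; lra).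
  pose proof (pos_INR n).
  assert (HX : Cnorm (Csub (if Nat.eqb n 1 then b else C0) (Cmul b (Cmul (natC n) (hsol b n))))
               <= Cnorm b + Cnorm b * (INR n * B ^ n)).
  { unfold Csub; eapply Rle_trans; [apply Cnorm_add|].
    rewrite Cnorm_opp, !Cnorm_mul, Cnorm_natC.
    assert (Cnorm (if Nat.eqb n 1 then b else C0) <= Cnorm b)
      by (destruct (Nat.eqb n 1); [lra | rewrite Cnorm_C0; lra]).
    assert (Cnorm b * (INR n * Cnorm (hsol b n)) <= Cnorm b * (INR n * B ^ n))
      by (apply Rmult_le_compat_l; [lra | apply Rmult_le_compat_l; lra]).
    lra. }
  set (X := Cnorm (Csub _ _)) in *.
  rewrite !S_INR; assert (Hr : 0 < INR n + 1 + 1) by lra.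
  assert (X <= (INR n + 1 + 1) * B ^ S n) by (cbn [pow]; unfold B in *; nra).
  apply Rmult_le_reg_l with (INR n + 1 + 1); [lra|].
  rewrite <- Rmult_assoc, Rinv_r, Rmult_1_l by lra; lra.
Qed.

Lemma scomp_hsol_ode (j b : CC) :
  sadd (smul (smul (slin j) (sadd sone (smul (sconst b) (slin j)))) (scomp j (uder (hsol b))))
       (scomp j (hsol b)) =
  smul (sconst b) (smul (slin j) (slin j)).
Proof.
  assert (E : scomp j (fun n => Cadd (ushift (uder (hsol b)) n)
                                     (Cmul b (ushift (ushift (uder (hsol b))) n))) =
              scomp j (fun n => Cadd (Cmul b (ushift (ushift uone) n)) (Copp (hsol b n))))
    by (f_equal; apply functional_extensionality; intro n; apply hsol_ode).
  rewrite !scomp_add, !scomp_scale, !scomp_opp, !scomp_ushift, scomp_uone in E.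
  set (H' := scomp j (uder (hsol b))) in *.
  transitivity (sadd (sadd (smul (slin j) H') (smul (sconst b) (smul (slin j) (smul (slin j) H'))))
                     (scomp j (hsol b))); [ring|].
  rewrite E; ring.
Qed.

Definition has_linear_part (F : series) (a b : CC) : Prop :=
  F 0%nat 0%nat = C0 /\ F 1%nat 0%nat = a /\ F 0%nat 1%nat = b.

Lemma linearizable_intro (P Q X1 Y1 : series) :
  has_linear_part X1 C1 C0 -> has_linear_part Y1 C0 C1 ->
  convergent X1 -> convergent Y1 ->
  lie P Q X1 = sopp Y1 -> lie P Q Y1 = X1 -> linearizable P Q.
Proof.
  intros (? & ? & ?) (? & ? & ?) HX HY HXY HYX; exists X1, Y1; repeat split; auto.
  - intros i j; exact (f_equal (fun F => F i j) HXY).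
  - intros i j; exact (f_equal (fun F => F i j) HYX).
Qed.

Lemma has_linear_part_smul (N G : series) (a b : CC) :
  has_linear_part N a b -> G 0%nat 0%nat = C1 -> has_linear_part (smul N G) a b.
Proof.
  intros (N00 & N10 & N01) G00; unfold has_linear_part.
  rewrite smul_00, smul_10, smul_01, N00, N10, N01, G00; repeat split; ring.
Qed.

Lemma spow_00 (G : series) (k : nat) : G 0%nat 0%nat = C1 -> spow G k 0%nat 0%nat = C1.
Proof.
  intro G00; induction k as [|k IH]; [reflexivity|].
  cbn [spow]; rewrite smul_00, G00, IH; ring.
Qed.

Lemma convergent_spow (G : series) (k : nat) : convergent G -> convergent (spow G k).
Proof.
  intro HG; induction k as [|k IH]; cbn [spow]; [apply convergent_mono | now apply convergent_mul].
Qed.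

Ltac convergent_tac :=
  unfold ssub, slin;
  repeat match goal with
  | |- convergent (sadd _ _) => apply convergent_add
  | |- convergent (smul _ _) => apply convergent_mul
  | |- convergent (sopp _) => apply convergent_opp
  | |- convergent (mono _ _ _) => apply convergent_mono
  | |- convergent (sconst _) => apply convergent_mono
  | |- convergent sX => apply convergent_mono
  | |- convergent sY => apply convergent_mono
  | |- convergent sone => apply convergent_mono
  end.

(* Rational coordinates [x1 = Nx / D^k], [y1 = Ny / D^k] with [D = 1 + p]:
   by the quotient rule the linearization equations reduce to polynomial identities. *)
Lemma linearizable_of_rational (P Q Nx Ny : series) (l : list (CC * nat * nat)) (k : nat) :
  no_const_term l -> convergent Nx -> convergent Ny ->
  has_linear_part Nx C1 C0 -> has_linear_part Ny C0 C1 ->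
  smul (lie P Q Nx) (sadd sone (spoly l)) =
    sadd (smul (sopp Ny) (sadd sone (spoly l)))
         (smul (sconst (natC k)) (smul Nx (lie P Q (sadd sone (spoly l))))) ->
  smul (lie P Q Ny) (sadd sone (spoly l)) =
    sadd (smul Nx (sadd sone (spoly l)))
         (smul (sconst (natC k)) (smul Ny (lie P Q (sadd sone (spoly l))))) ->
  linearizable P Q.
Proof.
  intros Hl CNx CNy LNx LNy EX EY.
  pose proof (sinv1_spec (spoly l) (spoly_00 l Hl)) as DI.
  assert (I00 : spow (sinv1 (spoly l)) k 0%nat 0%nat = C1) by (apply spow_00, sinv1_00).
  assert (CI : convergent (spow (sinv1 (spoly l)) k))
    by (apply convergent_spow, convergent_sinv1_spoly, Hl).
  apply (linearizable_intro P Q (smul Nx (spow (sinv1 (spoly l)) k))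
                                (smul Ny (spow (sinv1 (spoly l)) k)));
    try (apply has_linear_part_smul; assumption);
    try (apply convergent_mul; assumption).
  - replace (sopp (smul Ny (spow (sinv1 (spoly l)) k)))
      with (smul (sopp Ny) (spow (sinv1 (spoly l)) k)) by ring.
    now apply lie_div_pow with (D := sadd sone (spoly l)).
  - now apply lie_div_pow with (D := sadd sone (spoly l)).
Qed.

(* Complex coordinates: if [lie Z = j Z] and [lie W = - j W] then
   [x1 = (Z + W)/2], [y1 = j (W - Z)/2] linearize. *)
Lemma linearizable_of_eigenfunctions (P Q Z W : series) (j : CC) :
  Cmul j j = Copp C1 -> has_linear_part Z C1 j -> has_linear_part W C1 (Copp j) ->
  convergent Z -> convergent W ->
  lie P Q Z = smul (sconst j) Z -> lie P Q W = sopp (smul (sconst j) W) ->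
  linearizable P Q.
Proof.
  intros Hj (Z00 & Z10 & Z01) (W00 & W10 & W01) CZ CW LZ LW.
  set (half := mkC (/ 2) 0).
  pose proof (sconst_sqrt_m1 j Hj) as Hj'.
  apply (linearizable_intro P Q (smul (sconst half) (sadd Z W))
                                (smul (sconst half) (smul (sconst j) (ssub W Z)))).
  - unfold has_linear_part; rewrite !smul_sconst; unfold sadd.
    rewrite Z00, Z10, Z01, W00, W10, W01; unfold half; repeat split; Cexpand; field.
  - unfold has_linear_part, ssub; rewrite !smul_sconst; unfold sadd, sopp.
    rewrite Z00, Z10, Z01, W00, W10, W01; repeat split; [ring | ring|].
    transitivity (Cmul (Copp (Cmul half (Cadd C1 C1))) (Cmul j j)); [ring|].
    rewrite Hj; unfold half; Cexpand; field.
  - convergent_tac; assumption.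
  - unfold ssub; convergent_tac; assumption.
  - rewrite lie_mul, lie_sconst, lie_add, LZ, LW; ring.
  - unfold ssub; rewrite !lie_mul, !lie_sconst, lie_add, lie_opp, LZ, LW; ring [Hj'].
Qed.

(** * The four families *)

(* [mono c 0 0] is [sconst c] by definition; [change] makes this visible to [ring]. *)
Ltac mono_expand :=
  repeat first [rewrite mono_sX | rewrite mono_sY];
  repeat match goal with |- context [mono ?c 0 0] => change (mono c 0 0) with (sconst c) end.

Lemma Pcub_eq (a02 a03 : CC) : Pcub a02 a03 =
  sadd (sopp sY) (sadd (smul (sconst a02) (smul sY sY)) (smul (sconst a03) (smul sY (smul sY sY)))).
Proof. unfold Pcub; mono_expand; rewrite sconst_opp, sconst_1; ring. Qed.

Lemma Qcub_eq (b20 b11 b02 b30 b21 b12 : CC) : Qcub b20 b11 b02 b30 b21 b12 =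
  sadd sX (sadd (smul (sconst b20) (smul sX sX)) (sadd (smul (sconst b11) (smul sX sY))
  (sadd (smul (sconst b02) (smul sY sY)) (sadd (smul (sconst b30) (smul sX (smul sX sX)))
  (sadd (smul (sconst b21) (smul sX (smul sX sY))) (smul (sconst b12) (smul sX (smul sY sY)))))))).
Proof. unfold Qcub; mono_expand; rewrite sconst_1; ring. Qed.

Ltac linear_part_tac :=
  unfold has_linear_part, sadd, smul, sopp, sconst, sX, sY, mono; simpl; repeat split; ring.

Ltac rational_identity_tac :=
  cbn [spoly]; rewrite Pcub_eq, Qcub_eq; mono_expand; lie_expand; sconst_expand.

Lemma family2_linearizable (k : CC) :
  linearizable (Pcub C0 C0) (Qcub C0 (Cmul (natC 3) k) C0 (Cmul k k) C0 C0).
Proof.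
  apply (linearizable_of_rational _ _ sX (sadd sY (smul (sconst k) (smul sX sX)))
           [(k, 0%nat, 1%nat); (Cmul k k, 2%nat, 0%nat)] 1);
    [cbn; repeat split; lia | convergent_tac | convergent_tac
    | linear_part_tac | linear_part_tac | rational_identity_tac; ring ..].
Qed.

Lemma family3_linearizable (c : CC) :
  linearizable (Pcub C0 (Copp (Cmul (natC 4) (Cmul c c)))) (Qcub C0 C0 (Cmul (natC 3) c) C0 C0 C0).
Proof.
  apply (linearizable_of_rational _ _ (sadd sX (smul (sconst c) (smul sY sY))) sY
           [(Copp (Cmul (natC 2) c), 1%nat, 0%nat);
            (Copp (Cmul (natC 2) (Cmul c c)), 0%nat, 2%nat)] 1);
    [cbn; repeat split; lia | convergent_tac | convergent_tac
    | linear_part_tac | linear_part_tac | rational_identity_tac; ring ..].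
Qed.

Lemma family4_linearizable (j u : CC) : Cmul j j = Copp C1 ->
  linearizable (Pcub (Cmul (natC 9) (Cmul j u)) C0)
    (Qcub (Cmul (natC 12) u) (Cmul (natC 30) (Cmul j u)) (Copp (Cmul (natC 30) u)) C0 C0 C0).
Proof.
  intro Hj.
  pose proof (sconst_sqrt_m1 j Hj) as Hj'.
  set (p := sadd (smul (sconst (natC 2)) sX) (smul (sconst j) sY)).
  apply (linearizable_of_rational _ _ (sadd sX (smul (sconst (Cmul (natC 2) u)) (smul p p)))
           (sadd sY (smul (sconst (Cmul j u)) (smul p p)))
           [(Cmul (natC 12) u, 1%nat, 0%nat); (Cmul (natC 6) (Cmul u j), 0%nat, 1%nat)] 2);
    unfold p; [cbn; repeat split; lia | convergent_tac | convergent_tac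
    | linear_part_tac | linear_part_tac | rational_identity_tac; ring [Hj'] ..].
Qed.

Section Family1.
Variables j b : CC.
Hypothesis Hj : Cmul j j = Copp C1.

Let Hj' : smul (sconst j) (sconst j) = sopp sone := sconst_sqrt_m1 j Hj.

Let P : series := sopp sY.
Let Q : series := sadd sX (smul (sconst b) (smul (slin j) (slin j))).

Let denom_terms : list (CC * nat * nat) := [(b, 1%nat, 0%nat); (Cmul b j, 0%nat, 1%nat)].

Lemma lie_slin_family1 :
  lie P Q (slin j) = smul (sconst j) (smul (slin j) (sadd sone (smul (sconst b) (slin j)))).
Proof. unfold P, Q, slin; lie_expand; ring [Hj']. Qed.

Lemma lie_eigen_family1 :
  lie P Q (smul (slin j) (spow (sinv1 (spoly denom_terms)) 1)) =
  smul (sconst j) (smul (slin j) (spow (sinv1 (spoly denom_terms)) 1)).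
Proof.
  replace (smul (sconst j) (smul (slin j) (spow (sinv1 (spoly denom_terms)) 1)))
    with (smul (smul (sconst j) (slin j)) (spow (sinv1 (spoly denom_terms)) 1)) by ring.
  apply lie_div_pow with (D := sadd sone (spoly denom_terms));
    [apply sinv1_spec, spoly_00; cbn; lia|].
  assert (Hden : spoly denom_terms = smul (sconst b) (slin j))
    by (unfold denom_terms, slin; cbn [spoly]; mono_expand; sconst_expand; ring).
  rewrite Hden, lie_add, lie_sone, lie_mul, lie_sconst, lie_slin_family1; sconst_expand; ring.
Qed.

Lemma lie_coeigen_family1 :
  lie P Q (sadd (ssub sX (smul (sconst j) sY)) (scomp j (hsol b))) =
  sopp (smul (sconst j) (sadd (ssub sX (smul (sconst j) sY)) (scomp j (hsol b)))).
Proof.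
  rewrite lie_add, lie_scomp, lie_slin_family1.
  transitivity (sadd (lie P Q (ssub sX (smul (sconst j) sY)))
    (smul (sconst j) (ssub (sadd (smul (smul (slin j) (sadd sone (smul (sconst b) (slin j))))
                                       (scomp j (uder (hsol b)))) (scomp j (hsol b)))
                           (scomp j (hsol b)))));
    [ring|].
  rewrite scomp_hsol_ode; unfold ssub, P, Q, slin; lie_expand; ring [Hj'].
Qed.

Lemma family1_linearizable :
  linearizable (Pcub C0 C0) (Qcub b (Cmul (natC 2) (Cmul j b)) (Copp b) C0 C0 C0).
Proof.
  replace (Pcub C0 C0) with P by (unfold P; rewrite Pcub_eq, sconst_0; ring).
  replace (Qcub b (Cmul (natC 2) (Cmul j b)) (Copp b) C0 C0 C0) with Q
    by (unfold Q, slin; rewrite Qcub_eq; sconst_expand; ring [Hj']).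
  apply (linearizable_of_eigenfunctions P Q (smul (slin j) (spow (sinv1 (spoly denom_terms)) 1))
           (sadd (ssub sX (smul (sconst j) sY)) (scomp j (hsol b))) j Hj);
    [| | convergent_tac | | apply lie_eigen_family1 | apply lie_coeigen_family1].
  - apply has_linear_part_smul; [unfold slin; linear_part_tac | apply spow_00, sinv1_00].
  - unfold has_linear_part, scomp; cbn [hsol Nat.add Cpow].
    unfold ssub, sadd, sopp, smul, sconst, sX, sY, mono; simpl; repeat split; ring.
  - apply convergent_spow, convergent_sinv1_spoly; cbn; lia.
  - convergent_tac; apply convergent_scomp with (B := 1 + Cnorm b);
      [now apply Cnorm_sqrt_m1 | pose proof (Cnorm_ge0 b); lra | apply hsol_bound].
Qed.

End Family1.

Lemma family1_params (b20 b11 b02 : CC) :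
  Cadd b02 b20 = C0 -> Cadd (Cmul b11 b11) (Cmul (natC 4) (Cmul b20 b20)) = C0 ->
  exists j, Cmul j j = Copp C1 /\ b11 = Cmul (natC 2) (Cmul j b20) /\ b02 = Copp b20.
Proof.
  intros H1 H2.
  destruct (sum_sq_eq0 b11 (Cmul (natC 2) b20)) as (j & Hj & E).
  - rewrite <- H2; rewrite !natC_S, natC_0; ring.
  - exists j; repeat split; [exact Hj | rewrite E; ring |].
    transitivity (Csub (Cadd b02 b20) b20); [ring | rewrite H1; unfold Csub; ring].
Qed.

Lemma family2_params (b11 b30 : CC) :
  Cadd (Cmul (natC 9) b30) (Copp (Cmul b11 b11)) = C0 ->
  exists k, b11 = Cmul (natC 3) k /\ b30 = Cmul k k.
Proof.
  intro H; exists (mkC (Cre b11 / 3) (Cim b11 / 3)).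
  split; Cexpand; [field | field | nra | nra].
Qed.

Lemma family3_params (a03 b02 : CC) :
  Cadd (Cmul (natC 9) a03) (Cmul (natC 4) (Cmul b02 b02)) = C0 ->
  exists c, b02 = Cmul (natC 3) c /\ a03 = Copp (Cmul (natC 4) (Cmul c c)).
Proof.
  intro H; exists (mkC (Cre b02 / 3) (Cim b02 / 3)).
  split; Cexpand; [field | field | nra | nra].
Qed.

Lemma family4_params (a02 b20 b11 b02 : CC) :
  Cadd (Cmul (natC 2) b02) (Cmul (natC 5) b20) = C0 ->
  Cadd (Cmul (natC 10) a02) (Copp (Cmul (natC 3) b11)) = C0 ->
  Cadd (Cmul (natC 4) (Cmul b11 b11)) (Cmul (natC 25) (Cmul b20 b20)) = C0 ->
  exists j u, Cmul j j = Copp C1 /\ b20 = Cmul (natC 12) u /\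
    b11 = Cmul (natC 30) (Cmul j u) /\ b02 = Copp (Cmul (natC 30) u) /\
    a02 = Cmul (natC 9) (Cmul j u).
Proof.
  intros H1 H2 H3.
  destruct (sum_sq_eq0 (Cmul (natC 2) b11) (Cmul (natC 5) b20)) as (j & Hj & E).
  { rewrite <- H3; rewrite !natC_S, natC_0; ring. }
  exists j, (mkC (Cre b20 / 12) (Cim b20 / 12)); repeat split; [exact Hj | ..];
    clear Hj; Cexpand; first [field | lra].
Qed.

Theorem theorem1 (a02 a03 b20 b11 b02 b30 b21 b12 : CC) :
  (b12 = C0 /\ a02 = C0 /\ b30 = C0 /\ b21 = C0 /\ a03 = C0 /\
   (b02 + b20)%C = C0 /\ (b11 * b11 + natC 4 * (b20 * b20))%C = C0)
  \/
  (b12 = C0 /\ a02 = C0 /\ b20 = C0 /\ b02 = C0 /\ b21 = C0 /\ a03 = C0 /\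
   (natC 9 * b30 - b11 * b11)%C = C0)
  \/
  (b12 = C0 /\ a02 = C0 /\ b11 = C0 /\ b20 = C0 /\ b30 = C0 /\ b21 = C0 /\
   (natC 9 * a03 + natC 4 * (b02 * b02))%C = C0)
  \/
  (b12 = C0 /\ b30 = C0 /\ b21 = C0 /\ a03 = C0 /\
   (natC 2 * b02 + natC 5 * b20)%C = C0 /\
   (natC 10 * a02 - natC 3 * b11)%C = C0 /\
   (natC 4 * (b11 * b11) + natC 25 * (b20 * b20))%C = C0) ->
  linearizable (Pcub a02 a03) (Qcub b20 b11 b02 b30 b21 b12).
Proof.
  intros [H|[H|[H|H]]].
  - destruct H as (-> & -> & -> & -> & -> & H1 & H2).
    destruct (family1_params _ _ _ H1 H2) as (j & Hj & -> & ->).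
    now apply family1_linearizable.
  - destruct H as (-> & -> & -> & -> & -> & -> & H).
    destruct (family2_params _ _ H) as (k & -> & ->).
    apply family2_linearizable.
  - destruct H as (-> & -> & -> & -> & -> & -> & H).
    destruct (family3_params _ _ H) as (c & -> & ->).
    apply family3_linearizable.
  - destruct H as (-> & -> & -> & -> & H1 & H2 & H3).
    destruct (family4_params _ _ _ _ H1 H2 H3) as (j & u & Hj & -> & -> & -> & ->).
    now apply family4_linearizable.
Qed.
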